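(* Let $d\ge2$. For any matrix $X\in\mathbb{C}^{d^2\times d^2}$ (acting on $\mathbb{C}^d\otimes\mathbb{C}^d$), $$\sum_{\mathbf{a}\in\{0,\dots,d-1\}^2} (W_\mathbf{a}\otimes W_\mathbf{a})\,X\,(W_\mathbf{a}\otimes W_\mathbf{a})^\dagger = \sum_{\mathbf{a}\in\{0,\dots,d-1\}^2} \operatorname{tr}\!\big(X\,(W_\mathbf{a}^\dagger\otimes W_\mathbf{a})\big)\, W_\mathbf{a}\otimes W_\mathbf{a}^\dagger.$$
   Context: $\{|i\rangle\}_{i=0}^{d-1}$ is the standard basis of $\mathbb{C}^d$, indices mod $d$. Let $\tau=\exp(2\pi i\frac{d+1}{2d})$, $\omega=\tau^2=\exp(2\pi i/d)$, $S=\sum_{i=0}^{d-1}|i+1\rangle\langle i|$, $C=\sum_{i=0}^{d-1}\omega^i|i\rangle\langle i|$, and for $\mathbf{a}=(a_1,a_2)\in\mathbb{Z}^2$ let $W_\mathbf{a}=\tau^{a_1a_2}S^{a_1}C^{a_2}$. *)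

From HB Require Import structures.
From mathcomp Require Import all_boot all_order all_algebra.
From mathcomp Require Import reals trigo.
From mathcomp.real_closed Require Import complex mxtens.
Set Implicit Arguments. Unset Strict Implicit. Unset Printing Implicit Defensive.
Import Order.TTheory GRing.Theory Num.Theory.
Local Open Scope ring_scope.
Local Open Scope complex_scope.

Section Weyl.
Variable R : realType.
Variable d : nat.

Definition theta : R := 2 * pi * ((d + 1)%:R / (2 * d)%:R).
Definition tau : R[i] := cos theta +i* sin theta.
Definition omega : R[i] := tau ^+ 2.

Definition shift : 'M[R[i]]_d := \matrix_(i, j) ((val i == (val j + 1) %% d)%N)%:R.
Definition clock : 'M[R[i]]_d := \matrix_(i, j) ((i == j)%:R * omega ^+ val i).

(* matrix power (d is not syntactically a successor) *)
Definition mxpow (A : 'M[R[i]]_d) (k : nat) : 'M[R[i]]_d := iter k (mulmx A) 1%:M.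

Definition weyl (a1 a2 : nat) : 'M[R[i]]_d :=
  tau ^+ (a1 * a2) *: (mxpow shift a1 *m mxpow clock a2).
End Weyl.

Definition adj (R : realType) m n (A : 'M[R[i]]_(m, n)) : 'M[R[i]]_(n, m) :=
  map_mx (@conjc R) A^T.

From HB Require Import structures.
From mathcomp Require Import all_boot all_order all_algebra.
From mathcomp Require Import reals trigo.
From mathcomp.real_closed Require Import complex mxtens.
From mathcomp Require Import ring lra.
Import Order.TTheory GRing.Theory Num.Theory.
Local Open Scope ring_scope.

(* Every Weyl matrix is monomial: W_a e_j = tau^(a1 a2) omega^(a2 j) e_(j + a1).
   Hence both sides can be computed entrywise.  In the entry indexed by
   ((i1, i2), (k1, k2)) the phases of the four factors combine, because
   |tau| = 1, into omega^(a2 c) for a linear form c of the indices, and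
   summing over a2 with omega a primitive d-th root of unity (orthogonality
   of the characters of Z/d) leaves, on both sides,
   d [k2 = i2 + i1 - k1] sum_b X_((i1 - b, i2 - b), (k1 - b, k2 - b)). *)

Section Expi.
Context {R : realType}.
Local Open Scope complex_scope.

Definition expi (x : R) : R[i] := cos x +i* sin x.

Lemma expi0 : expi 0 = 1.
Proof. by rewrite /expi cos0 sin0. Qed.

Lemma expiD x y : expi (x + y) = expi x * expi y.
Proof. by rewrite /expi cosD sinD /=; congr (_ +i* _); ring. Qed.

Lemma expiMn x k : expi (x *+ k) = expi x ^+ k.
Proof. by elim: k => [|k IHk]; rewrite ?mulr0n ?expi0 // mulrS expiD IHk exprS. Qed.

Lemma expi2pi : expi (pi *+ 2) = 1.
Proof. by rewrite /expi cos2pi sin2pi. Qed.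

Lemma conjc_expi x : conjc (expi x) = expi (- x).
Proof. by rewrite /expi cosN sinN. Qed.

Lemma mul_conjc_expi x : conjc (expi x) * expi x = 1.
Proof. by rewrite conjc_expi -expiD addNr expi0. Qed.

Lemma expi_mulr2n_neq1 y : 0 < y < pi -> expi (y *+ 2) != 1.
Proof.
move=> /sin_gt0_pi sin_y_gt0.
rewrite /expi eq_complex /= negb_and cos_mulr2n cos2sin2; apply/orP; left.
by apply/eqP => cos_eq1; nra.
Qed.

End Expi.

Lemma sum_prim_rootX {K : idomainType} {n : nat} {z : K} (k : nat) :
  n.-primitive_root z -> \sum_(i < n) (z ^+ k) ^+ i = (n %| k)%N%:R * n%:R.
Proof.
move=> prim_z; have [n_dvd_k | n_ndvd_k] := boolP (n %| k)%N.
  rewrite mul1r; move: n_dvd_k; rewrite (prim_order_dvd prim_z) => /eqP ->.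
  by rewrite (eq_bigr (fun=> 1)) ?sumr_const ?card_ord // => i _; rewrite expr1n.
rewrite mul0r; apply/eqP.
have : (z ^+ k - 1) * \sum_(i < n) (z ^+ k) ^+ i = 0.
  by rewrite -subrX1 exprAC (prim_expr_order prim_z) expr1n subrr.
by move/eqP; rewrite mulf_eq0 subr_eq0 -(prim_order_dvd prim_z) (negbTE n_ndvd_k).
Qed.

Section WeylPhases.
Context (R : realType) {m : nat}.
Local Notation d := m.+1.
Local Notation tau := (tau R d).
Local Notation omega := (omega R d).

Lemma thetaE : theta R d = pi + pi / d%:R.
Proof. by rewrite /theta natrD natrM; field; rewrite addrC natr1 pnatr_eq0. Qed.

Lemma omega_expi : omega = expi ((pi / d%:R) *+ 2).
Proof. by rewrite /omega /tau -expiMn thetaE mulrnDl expiD expi2pi mul1r. Qed.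

Lemma omega_prim_root : d.-primitive_root omega.
Proof.
have d_gt0 : 0 < d%:R :> R by rewrite ltr0n.
have omega_d : omega ^+ d = 1.
  have pi_d : pi / d%:R *+ d = pi :> R by rewrite -[_ *+ d]mulr_natr mulfVK ?gt_eqF.
  by rewrite omega_expi -expiMn -mulrnA mulnC mulrnA pi_d expi2pi.
have [k prim_k k_dvd_d] := prim_order_exists (ltn0Sn m) omega_d.
suff k_eq_d : k = d by move: prim_k; rewrite k_eq_d.
apply/eqP; rewrite eqn_leq dvdn_leq //= leqNgt; apply/negP => k_lt_d.
have := prim_expr_order prim_k; apply/eqP.
rewrite omega_expi -expiMn -mulrnA mulnC mulrnA; apply: expi_mulr2n_neq1.
rewrite -[_ *+ k]mulr_natr mulr_gt0 ?divr_gt0 ?pi_gt0 ?ltr0n ?(prim_order_gt0 prim_k) //=.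
by rewrite mulrAC ltr_pdivrMr // ltr_pM2l ?pi_gt0 // ltr_nat.
Qed.

Lemma mul_conjc_tauX k : conjc (tau ^+ k) * tau ^+ k = 1.
Proof. by rewrite rmorphXn -exprMn mul_conjc_expi expr1n. Qed.

Definition chi (x : 'I_d) : R[i] := omega ^+ x.

Lemma chi0 : chi 0 = 1.
Proof. by rewrite /chi expr0. Qed.

Lemma chiD x y : chi (x + y) = chi x * chi y.
Proof. by rewrite /chi /= (prim_expr_mod omega_prim_root) exprD. Qed.

Lemma conjc_chi x : conjc (chi x) = chi (- x).
Proof.
have chi_unit : conjc (chi x) * chi x = 1.
  by rewrite /chi rmorphXn -exprMn mul_conjc_tauX expr1n.
by rewrite -[LHS]mulr1 -chi0 -(subrr x) chiD mulrA chi_unit mul1r.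
Qed.

Lemma sum_chiX x : \sum_(a < d) chi x ^+ a = (x == 0)%:R * d%:R.
Proof. by rewrite /chi (sum_prim_rootX x omega_prim_root) /dvdn modn_small. Qed.

End WeylPhases.

Lemma sum_mxtens_index (V : nmodType) p q (F : 'I_(p * q) -> V) :
  \sum_j F j = \sum_(j1 < p) \sum_(j2 < q) F (mxtens_index (j1, j2)).
Proof.
rewrite pair_big /= (reindex (@mxtens_index p q)) /=; first by apply: eq_bigr => -[].
by exists (@mxtens_unindex p q) => x _; rewrite (mxtens_indexK, mxtens_unindexK).
Qed.

Lemma sumr_indicator {I : finType} {K : pzSemiRingType} (c : I) (F : I -> K) :
  \sum_i (i == c)%:R * F i = F c.
Proof.
by rewrite (bigD1 c) //= eqxx mul1r big1 ?addr0 // => i /negbTE ->; rewrite mul0r.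
Qed.

Lemma sumr_indicator_shift (K : pzSemiRingType) m (i s : 'I_m.+1) (F : 'I_m.+1 -> K) :
  \sum_j (i == j + s)%:R * F j = F (i - s).
Proof.
by rewrite -(sumr_indicator (i - s)); apply: eq_bigr => j _; rewrite [j == _]eq_sym subr_eq.
Qed.

Section MonomialMatrix.
Context {K : comPzRingType} {m : nat}.
Local Notation d := m.+1.
Local Notation idx := (@mxtens_index d d).

Definition monomx (s : 'I_d) (f : 'I_d -> K) : 'M[K]_d :=
  \matrix_(i, j) ((i == j + s)%:R * f j).

Lemma mul_monomx s t f g :
  monomx s f *m monomx t g = monomx (s + t) (fun j => f (j + t) * g j).
Proof.
apply/matrixP => i j; rewrite !mxE.
under eq_bigr do rewrite !mxE mulrCA.
by rewrite sumr_indicator mulrA [s + t]addrC addrA.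
Qed.

Lemma scale_monomx c s f : c *: monomx s f = monomx s (fun j => c * f j).
Proof. by apply/matrixP => i j; rewrite !mxE mulrCA. Qed.

Lemma mul_tens_monomx s t f g p (Y : 'M[K]_(d * d, p)) i1 i2 l :
  ((monomx s f *t monomx t g) *m Y) (idx (i1, i2)) l
  = f (i1 - s) * g (i2 - t) * Y (idx (i1 - s, i2 - t)) l.
Proof.
rewrite mxE sum_mxtens_index.
have reorder (a b x y z : K) : a * x * (b * y) * z = a * (b * (x * y * z)) by ring.
under eq_bigr do under eq_bigr do rewrite tensmxE !mxE reorder.
under eq_bigr do rewrite -mulr_sumr sumr_indicator_shift.
by rewrite sumr_indicator_shift.
Qed.

Lemma mulmx_tens_monomx s t f g p (Y : 'M[K]_(p, d * d)) l k1 k2 :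
  (Y *m (monomx s f *t monomx t g)) l (idx (k1, k2))
  = Y l (idx (k1 + s, k2 + t)) * (f k1 * g k2).
Proof.
rewrite mxE sum_mxtens_index.
have reorder (a b x y z : K) : z * (a * x * (b * y)) = a * (b * (z * (x * y))) by ring.
under eq_bigr do under eq_bigr do rewrite tensmxE !mxE reorder.
under eq_bigr do rewrite -mulr_sumr sumr_indicator.
by rewrite sumr_indicator.
Qed.

End MonomialMatrix.

Section Adjoint.
Variable R : realType.

Lemma adjE m n (A : 'M[R[i]]_(m, n)) i j : adj A i j = conjc (A j i).
Proof. by rewrite !mxE. Qed.

Lemma adj_tensmx m n p q (A : 'M[R[i]]_(m, n)) (B : 'M[R[i]]_(p, q)) :
  adj (A *t B) = adj A *t adj B.
Proof. by rewrite /adj trmx_tens map_mxT. Qed.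

Lemma adj_monomx k (s : 'I_k.+1) (f : 'I_k.+1 -> R[i]) :
  adj (monomx s f) = monomx (- s) (fun j => conjc (f (j - s))).
Proof.
apply/matrixP => i j; rewrite !mxE rmorphM rmorph_nat [i == _]eq_sym subr_eq.
by case: eqP => [->|_]; rewrite ?addrK // !mul0r.
Qed.

End Adjoint.

Section WeylMonomial.
Context (R : realType) {m : nat}.
Local Notation d := m.+1.

Definition weyl_weight (a1 a2 : nat) (j : 'I_d) : R[i] :=
  tau R d ^+ (a1 * a2) * chi R j ^+ a2.

Lemma shift_monomx : shift R d = monomx (inZp 1) (fun _ => 1).
Proof. by apply/matrixP => i j; rewrite !mxE mulr1 -val_eqE /= modnDmr. Qed.

Lemma clock_monomx : clock R d = monomx 0 (chi R).
Proof.
apply/matrixP => i j; rewrite !mxE addr0.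
by case: eqP => [->|_]; rewrite ?mul0r.
Qed.

Lemma mxpow_shift k : mxpow (shift R d) k = monomx (inZp k) (fun _ => 1).
Proof.
elim: k => [|k IHk].
  have inZp0 : inZp 0 = 0 :> 'I_d by apply: val_inj.
  by apply/matrixP => i j; rewrite !mxE mulr1 inZp0 addr0.
rewrite /mxpow iterS -/(mxpow _ _) IHk shift_monomx mul_monomx.
have -> : inZp 1 + inZp k = inZp k.+1 :> 'I_d.
  by apply: val_inj; rewrite /= modnDm add1n.
by apply/matrixP => i j; rewrite !mxE mulr1.
Qed.

Lemma mxpow_clock k : mxpow (clock R d) k = monomx 0 (fun j => chi R j ^+ k).
Proof.
elim: k => [|k IHk]; first by apply/matrixP => i j; rewrite !mxE addr0 expr0 mulr1.
rewrite /mxpow iterS -/(mxpow _ _) IHk clock_monomx mul_monomx addr0.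
by apply/matrixP => i j; rewrite !mxE addr0 exprS.
Qed.

Lemma weyl_monomx (a1 a2 : 'I_d) : weyl R d a1 a2 = monomx a1 (weyl_weight a1 a2).
Proof.
rewrite /weyl mxpow_shift mxpow_clock mul_monomx scale_monomx valZpK addr0.
by apply/matrixP => i j; rewrite !mxE mul1r.
Qed.

Lemma weyl_weight_conjM a1 a2 x y z w :
  weyl_weight a1 a2 x * weyl_weight a1 a2 y
    * (conjc (weyl_weight a1 a2 z) * conjc (weyl_weight a1 a2 w))
  = chi R (x + y - z - w) ^+ a2.
Proof.
rewrite /weyl_weight !rmorphM !(rmorphXn _ a2) /= !conjc_chi.
set t := tau R d ^+ (a1 * a2).
transitivity ((conjc t * t) * (conjc t * t)
  * (chi R x * chi R y * chi R (- z) * chi R (- w)) ^+ a2).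
  by rewrite !exprMn; ring.
by rewrite mul_conjc_tauX !mul1r -!chiD.
Qed.

End WeylMonomial.

Section WeylEntries.
Variables (R : realType) (n : nat).
(* With [d = n.+2], ['I_d] is a commutative ring, so index identities close by [ring]. *)
Local Notation d := n.+2.
Local Notation idx := (@mxtens_index d d).
Variable X : 'M[R[i]]_(d * d).
Variables i1 i2 k1 k2 : 'I_d.

Section FixedWeyl.
Variables a1 a2 : 'I_d.
Local Notation W := (weyl R d a1 a2).

Lemma twirl_term_entry :
  ((W *t W) *m X *m adj (W *t W)) (idx (i1, i2)) (idx (k1, k2))
  = chi R (i1 + i2 - k1 - k2) ^+ a2 * X (idx (i1 - a1, i2 - a1)) (idx (k1 - a1, k2 - a1)).
Proof.
rewrite weyl_monomx adj_tensmx adj_monomx mulmx_tens_monomx mul_tens_monomx.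
by rewrite mulrAC weyl_weight_conjM; congr (chi R _ ^+ _ * _); ring.
Qed.

Lemma expansion_term_entry :
  \tr (X *m (adj W *t W)) * (W *t adj W) (idx (i1, i2)) (idx (k1, k2))
  = (i1 == k1 + a1)%:R * (k2 == i2 + a1)%:R * \sum_(j1 < d) \sum_(j2 < d)
      chi R (j2 + k1 - (j1 - a1) - i2) ^+ a2 * X (idx (j1, j2)) (idx (j1 - a1, j2 + a1)).
Proof.
rewrite tensmxE adjE weyl_monomx !mxE rmorphM rmorph_nat /=.
rewrite adj_monomx /mxtrace sum_mxtens_index mulr_suml mulr_sumr.
apply: eq_bigr => j1 _; rewrite mulr_suml mulr_sumr; apply: eq_bigr => j2 _.
by rewrite mulmx_tens_monomx -(weyl_weight_conjM R a1 a2 j2 k1 (j1 - a1) i2); ring.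
Qed.

End FixedWeyl.

Lemma twirl_entry :
  (\sum_(a1 < d) \sum_(a2 < d)
     (weyl R d a1 a2 *t weyl R d a1 a2) *m X *m adj (weyl R d a1 a2 *t weyl R d a1 a2))
    (idx (i1, i2)) (idx (k1, k2))
  = (k2 == i2 + (i1 - k1))%:R * d%:R
      * \sum_(b < d) X (idx (i1 - b, i2 - b)) (idx (k1 - b, k2 - b)).
Proof.
rewrite summxE; under eq_bigr do rewrite summxE.
under eq_bigr do under eq_bigr do rewrite twirl_term_entry.
under eq_bigr do rewrite -mulr_suml sum_chiX.
have -> : (i1 + i2 - k1 - k2 == 0) = (k2 == i2 + (i1 - k1)).
  by rewrite subr_eq0 eq_sym; congr (_ == _); ring.
by rewrite mulr_sumr.
Qed.

Lemma expansion_entry :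
  (\sum_(a1 < d) \sum_(a2 < d)
     \tr (X *m (adj (weyl R d a1 a2) *t weyl R d a1 a2))
       *: (weyl R d a1 a2 *t adj (weyl R d a1 a2)))
    (idx (i1, i2)) (idx (k1, k2))
  = (k2 == i2 + (i1 - k1))%:R * d%:R
      * \sum_(b < d) X (idx (i1 - b, i2 - b)) (idx (k1 - b, k2 - b)).
Proof.
rewrite summxE; under eq_bigr do rewrite summxE.
under eq_bigr do under eq_bigr do rewrite mxE expansion_term_entry.
under eq_bigr do rewrite -mulr_sumr -mulrA [k1 + _]addrC.
rewrite sumr_indicator_shift; case: eqP => [->|_]; last by rewrite !mul0r.
rewrite !mul1r exchange_big /=; under eq_bigr do rewrite exchange_big /=.
have phase_eq0 j1 j2 : (j2 + k1 - (j1 - (i1 - k1)) - i2 == 0) = (j2 == j1 - i1 + i2).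
  by rewrite -[RHS]subr_eq0; congr (_ == 0); ring.
under eq_bigr do under eq_bigr do rewrite -mulr_suml sum_chiX phase_eq0 -mulrA.
under eq_bigr do rewrite sumr_indicator.
have subr_inj : injective (fun b : 'I_d => i1 - b) by move=> b c /addrI /oppr_inj.
rewrite mulr_sumr (reindex_inj subr_inj) /=; apply: eq_bigr => b _.
by congr (_ * X (idx (_, _)) (idx (_, _))); ring.
Qed.

End WeylEntries.

Theorem lemma5 (R : realType) (d : nat) (hd : (2 <= d)%N) (X : 'M[R[i]]_(d * d)) :
  \sum_(a1 < d) \sum_(a2 < d)
     (tensmx (weyl R d a1 a2) (weyl R d a1 a2)) *m X
       *m adj (tensmx (weyl R d a1 a2) (weyl R d a1 a2))
  = \sum_(a1 < d) \sum_(a2 < d)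
     \tr (X *m tensmx (adj (weyl R d a1 a2)) (weyl R d a1 a2))
       *: tensmx (weyl R d a1 a2) (adj (weyl R d a1 a2)).
Proof.
case: d hd X => [|[|n]] // _ X.
apply/matrixP => p q.
case: (mxtens_indexP p) => i1 i2; case: (mxtens_indexP q) => k1 k2.
by rewrite twirl_entry expansion_entry.
Qed.
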